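(* Assume the standing setup below. Then the homogeneous system of linear equations over $\mathbb{F}_p$ \[ \{\,L_I=0 \;:\; I\subseteq X,\ |I|\le s\,\} \] in the unknowns $(x_1,\ldots,x_m)$ has only the trivial solution $x=0$. Consequently $m=|\mathcal{A}|$ is at most the dimension of the $\mathbb{F}_p$-span of $\{L_I: I\subseteq X,\ |I|\le s\}$.
   Context: Standing setup: $p$ is a prime; $K=\{k_1,\ldots,k_r\}$ and $L=\{l_1,\ldots,l_s\}$ are disjoint subsets of $\{0,1,\ldots,p-1\}$; $\mathcal{A}=\{A_1,\ldots,A_m\}$ is a family of distinct subsets of $[n]$ with $|A_i|\pmod p\in K$ for all $i$ and $|A_i\cap A_j|\pmod p\in L$ for all $i\ne j$. Let $X=[n-1]=\{1,\ldots,n-1\}$. Associate a variable $x_i$ to each $A_i$, and for each $I\subseteq X$ define the linear form over $\mathbb{F}_p$ \[ L_I=\sum_{i:\ I\subseteq A_i} x_i . \] For $j\ge 0$ let $\mathbb{P}_j(X)$ denote the set of $j$-element subsets of $X$. *)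

From HB Require Import structures.
From mathcomp Require Import all_boot all_order all_algebra.
Set Implicit Arguments. Unset Strict Implicit. Unset Printing Implicit Defensive.
Import GRing.Theory.
Local Open Scope ring_scope.

(* The ground set [n] = {1,...,n} is modelled by 'I_n = {0,...,n-1} via k |-> k+1.
   Hence X = [n-1] = {1,...,n-1} corresponds to the ordinals of value < n-1. *)
Definition Xset (n : nat) : {set 'I_n} := [set i : 'I_n | (i.+1 < n)%N].

Definition Leval (p n m : nat) (A : 'I_m -> {set 'I_n}) (I : {set 'I_n})
  (x : 'I_m -> 'F_p) : 'F_p :=
  \sum_(i < m | I \subset A i) x i.

Definition Lrow (p n m : nat) (A : 'I_m -> {set 'I_n}) (I : {set 'I_n})
  : 'rV['F_p]_m :=
  \row_(i < m) (if I \subset A i then 1 else 0).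

From HB Require Import structures.
From mathcomp Require Import all_boot all_order all_algebra zify.
Set Implicit Arguments. Unset Strict Implicit. Unset Printing Implicit Defensive.
Import GRing.Theory.
Local Open Scope ring_scope.

(* Polynomial method modulo p.  For a solution x and each j, evaluate
   f_j(t) = prod_{l in L} (t - l) at t = |A_i ∩ A_j|: since L and K are disjoint
   mod p, f_j vanishes for i <> j but not for i = j.  Writing
   |A_i ∩ B| = sum_{b in B} [b in A_i], any product of at most s = |L| factors
   (|A_i ∩ B| + c) with B ⊆ X, weighted by x_i and summed over i, is a
   combination of the L_I with I ⊆ X, |I| <= s, hence is 0.  The point n is the
   only one outside X; replacing its indicator in A_i ∩ A_j by its indicator in
   A_j turns f_j into such a product, equal to f_j unless n lies in A_j but not
   in A_i.  So x vanishes first on the sets avoiding n, then on all of them.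
   The rank bound is the dual statement: the row space of the L_I has no
   nonzero annihilator. *)

Lemma card_setI_sum (T : finType) (A B : {set T}) :
  #|A :&: B| = (\sum_(b in B) (b \in A))%N.
Proof.
rewrite -sum1_card big_mkcond [RHS]big_mkcond /=.
by apply: eq_bigr => b _; rewrite in_setI andbC; case: (b \in B); case: (b \in A).
Qed.

Lemma val_notin_Xset n (a : 'I_n) : a \notin Xset n -> val a = n.-1.
Proof. rewrite inE -leqNgt /= => aX; have := ltn_ord a; move: aX; lia. Qed.

Lemma card_setD_Xset n (A : {set 'I_n}) :
  #|A :\: Xset n| = ~~ (A \subset Xset n) :> nat.
Proof.
apply/eqP; rewrite eqn_leq; apply/andP; split.
  case: (boolP (A \subset Xset n)) => [| _].
    by rewrite -setD_eq0 => /eqP ->; rewrite cards0.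
  apply/card_le1_eqP => a b /setDP [_ aX] /setDP [_ bX].
  by apply: val_inj; rewrite !val_notin_Xset.
case: (boolP (A \subset Xset n)) => //= /subsetPn [a aA aX].
by apply/card_gt0P; exists a; rewrite in_setD aA aX.
Qed.

Lemma setI_subset_Xset n (A B : {set 'I_n}) :
  (A :&: B \subset Xset n) = (A \subset Xset n) || (B \subset Xset n).
Proof.
apply/idP/idP; last first.
  by case/orP => sub; apply: subset_trans sub; rewrite ?subsetIl ?subsetIr.
apply: contraTT; rewrite negb_or => /andP [/subsetPn [a aA aX] /subsetPn [b bB bX]].
have ab : a = b by apply: val_inj; rewrite !val_notin_Xset.
by apply/subsetPn; exists a; rewrite ?in_setI ?aA ?ab.
Qed.

Lemma card_setI_Xset n (A B : {set 'I_n}) :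
  #|A :&: B| = (#|A :&: (B :&: Xset n)| + ~~ (A :&: B \subset Xset n))%N.
Proof. by rewrite -card_setD_Xset setIA cardsID. Qed.

Section LowForms.

Variables (p n m : nat) (A : 'I_m -> {set 'I_n}).

Definition low_forms_vanish (X : {set 'I_n}) (d : nat) (x : 'I_m -> 'F_p) :=
  forall I : {set 'I_n}, I \subset X -> (#|I| <= d)%N -> Leval A I x = 0.

Lemma Leval_setU1 (I : {set 'I_n}) b (x : 'I_m -> 'F_p) :
  Leval A (b |: I) x = \sum_(i < m | I \subset A i) x i * (b \in A i)%:R.
Proof.
rewrite /Leval big_mkcond [RHS]big_mkcond /=; apply: eq_bigr => i _.
by rewrite subUset sub1set; case: (b \in A i); case: (I \subset A i);
  rewrite /= ?mulr1 ?mulr0.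
Qed.

Lemma low_forms_vanish_mul_card (X B : {set 'I_n}) d (c : 'F_p) x :
  B \subset X -> low_forms_vanish X d.+1 x ->
  low_forms_vanish X d (fun i => x i * (#|A i :&: B|%:R + c)).
Proof.
move=> sBX xX I sIX cardI; rewrite /Leval.
under eq_bigr do rewrite mulrDr.
rewrite big_split /= -mulr_suml -/(Leval A I x) (xX I sIX (leqW cardI)) mul0r addr0.
under eq_bigr do rewrite card_setI_sum natr_sum mulr_sumr.
rewrite exchange_big /=; apply: big1 => b Bb.
rewrite -Leval_setU1; apply: xX.
  by rewrite subUset sub1set sIX (subsetP sBX b Bb).
by rewrite cardsU1 -add1n leq_add ?leq_b1.
Qed.

Lemma low_forms_vanish_prod_card (X B : {set 'I_n}) d (cs : seq 'F_p) x :
  B \subset X -> (size cs <= d)%N -> low_forms_vanish X d x ->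
  \sum_i x i * \prod_(c <- cs) (#|A i :&: B|%:R + c) = 0.
Proof.
move=> sBX; elim: cs d x => [|c cs IHcs] d x.
  move=> _ xX; transitivity (Leval A set0 x); last by apply: xX; rewrite ?sub0set ?cards0.
  rewrite /Leval [RHS]big_mkcond /=; apply: eq_bigr => i _.
  by rewrite sub0set big_nil mulr1.
case: d => // d; rewrite [size _]/= ltnS => size_cs xX.
under eq_bigr do rewrite big_cons mulrA.
exact: IHcs size_cs (low_forms_vanish_mul_card c sBX xX).
Qed.

End LowForms.

Section ModularUniform.

Variables (p n m : nat) (K L : seq nat) (A : 'I_m -> {set 'I_n}).
Hypotheses (p_prime : prime p) (L_lt_p : all (fun l => (l < p)%N) L).
Hypothesis K_disjoint_L : forall k, k \in K -> k \notin L.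
Hypothesis cardA_mod : forall i, (#|A i| %% p)%N \in K.
Hypothesis cardAI_mod : forall i j, i != j -> (#|A i :&: A j| %% p)%N \in L.

Definition FWpoly (j i : 'I_m) : 'F_p := \prod_(l <- L) (#|A i :&: A j|%:R - l%:R).

Lemma FWpoly_offdiag i j : i != j -> FWpoly j i = 0.
Proof.
by move=> ij; rewrite /FWpoly (big_rem _ (cardAI_mod ij)) /= Fp_nat_mod // subrr mul0r.
Qed.

Lemma FWpoly_diag_neq0 j : FWpoly j j != 0.
Proof.
rewrite prodf_seq_neq0; apply/allP => l Ll /=; rewrite setIid subr_eq0.
move: (K_disjoint_L (cardA_mod j)); apply: contraNN => /eqP /(congr1 val).
by rewrite /= !val_Fp_nat // (modn_small (allP L_lt_p l Ll)) => ->.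
Qed.

(* f_j with the indicator of n in A_i ∩ A_j replaced by that in A_j. *)
Definition FWpolyX (j i : 'I_m) : 'F_p :=
  \prod_(l <- L) (#|A i :&: (A j :&: Xset n)|%:R
                  + ((~~ (A j \subset Xset n))%:R - l%:R)).

Lemma FWpolyXE i j :
  ~~ (A i \subset Xset n) || (A j \subset Xset n) -> FWpolyX j i = FWpoly j i.
Proof.
move=> outX; apply: eq_bigr => l _.
rewrite [in RHS]card_setI_Xset [in RHS]setI_subset_Xset natrD -addrA.
by move: outX; case: (A i \subset Xset n); case: (A j \subset Xset n).
Qed.

Variable x : 'I_m -> 'F_p.
Hypothesis x_sol : low_forms_vanish A (Xset n) (size L) x.

Lemma sum_FWpolyX j : \sum_i x i * FWpolyX j i = 0.
Proof.
rewrite -[RHS](low_forms_vanish_prod_card (subsetIr (A j) (Xset n))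
  (eq_leq (size_map (fun l => (~~ (A j \subset Xset n))%:R - l%:R) L)) x_sol).
by apply: eq_bigr => i _; rewrite big_map.
Qed.

Lemma solution_eq0_of j :
  (forall i, i != j -> A i \subset Xset n -> ~~ (A j \subset Xset n) -> x i = 0) ->
  x j = 0.
Proof.
move=> x_outX; have := sum_FWpolyX j.
rewrite (bigD1 j) //= big1 => [|i ij].
  rewrite addr0 FWpolyXE ?orNb // => /eqP.
  by rewrite mulf_eq0 (negbTE (FWpoly_diag_neq0 j)) orbF => /eqP.
case: (boolP (~~ (A i \subset Xset n) || (A j \subset Xset n))) => [outX | ].
  by rewrite FWpolyXE // FWpoly_offdiag ?mulr0.
by rewrite negb_or negbK => /andP [iX jX]; rewrite x_outX ?mul0r.
Qed.

Lemma solution_eq0 i : x i = 0.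
Proof.
have x_inX k : A k \subset Xset n -> x k = 0.
  by move=> kX; apply: solution_eq0_of => i' _ _; rewrite kX.
by apply: solution_eq0_of => i' _ /x_inX.
Qed.

End ModularUniform.

Lemma rank_sumsmx_ge (F : fieldType) (T : finType) (P : pred T) m
    (r : T -> 'rV[F]_m) :
  (forall v : 'cV[F]_m, (forall t, P t -> r t *m v = 0) -> v = 0) ->
  (m <= \rank (\sum_(t | P t) <<r t>>))%N.
Proof.
set S := (\sum_(t | P t) _)%MS => kerS0.
have coker_col0 j : col j (cokermx S) = 0.
  apply: kerS0 => t Pt; rewrite colE mulmxA.
  have /eqP -> : r t *m cokermx S == 0.
    by rewrite -submxE (submx_trans _ (sumsmx_sup t Pt (submx_refl _))) ?genmxE.
  by rewrite mul0mx.
have coker0 : cokermx S = 0.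
  apply/matrixP => i j.
  by have := congr1 (fun v : 'cV[F]_m => v i 0) (coker_col0 j); rewrite !mxE.
by rewrite -subn_eq0 -mxrank_coker coker0 mxrank0.
Qed.

Lemma Lrow_mul p n m (A : 'I_m -> {set 'I_n}) I (v : 'cV['F_p]_m) :
  (Lrow p A I *m v) 0 0 = Leval A I (fun k => v k 0).
Proof.
rewrite mxE /Leval [RHS]big_mkcond /=; apply: eq_bigr => k _.
by rewrite mxE; case: (I \subset A k); rewrite ?mul1r ?mul0r.
Qed.

Unset Implicit Arguments.

Theorem mainTheorem3 (p n m : nat) (K L : seq nat) (A : 'I_m -> {set 'I_n}) :
  prime p ->
  uniq K -> uniq L ->
  all (fun k => (k < p)%N) K -> all (fun l => (l < p)%N) L ->
  (forall k, k \in K -> k \notin L) ->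
  injective A ->
  (forall i, (#|A i| %% p)%N \in K) ->
  (forall i j, i != j -> (#|A i :&: A j| %% p)%N \in L) ->
  (forall x : 'I_m -> 'F_p,
      (forall I : {set 'I_n}, I \subset Xset n -> (#|I| <= size L)%N ->
         Leval A I x = 0) ->
      forall i, x i = 0)
  /\
  (m <= \rank (\sum_(I : {set 'I_n} | (I \subset Xset n) && (#|I| <= size L)%N)
                 <<Lrow p A I>>)%MS)%N.
Proof.
move=> p_prime _ _ _ L_lt_p K_disjoint_L _ cardA_mod cardAI_mod.
have trivial_solution := solution_eq0 p_prime L_lt_p K_disjoint_L cardA_mod cardAI_mod.
split=> [x|]; first exact: trivial_solution.
apply: rank_sumsmx_ge => v v_ker.
apply/matrixP => k j; rewrite ord1 mxE.
apply: (trivial_solution (fun k => v k 0)) => I IX cardI.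
by rewrite -Lrow_mul v_ker ?IX // mxE.
Qed.
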